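(* Fix a rooted tree $T$ on $t\ge2$ vertices and let $G$ be a connected graph with at least $2t$ vertices. Then any two pendant copies of $T$ in $G$ that share at least one vertex have the same root.
   Context: A pendant copy of the rooted tree $T$ in $G$ is a set $S$ of $t$ vertices of $G$ together with a bijection from the vertices of $T$ to $S$ such that two vertices of $S$ are adjacent in $G$ if and only if the corresponding vertices of $T$ are adjacent, and no vertex of $S$ other than the image of the root (called the root of the copy) has a neighbour outside $S$. Equivalently, $G$ is obtained by identifying the root of $T$ with a vertex of a graph $H$. *)

From mathcomp Require Import all_boot.
Set Implicit Arguments. Unset Strict Implicit. Unset Printing Implicit Defensive.

Definition simple_graph (V : finType) (e : rel V) : Prop :=
  symmetric e /\ irreflexive e.

Definition connected_graph (V : finType) (e : rel V) : Prop :=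
  forall x y : V, connect e x y.

Definition has_cycle (V : finType) (e : rel V) : Prop :=
  exists (x : V) (p : seq V),
    [/\ 2 <= size p, uniq (x :: p), path e x p & e (last x p) x].

Definition is_tree (V : finType) (e : rel V) : Prop :=
  [/\ simple_graph e, connected_graph e & ~ has_cycle e].

Definition pendant_copy (T V : finType) (eT : rel T) (r : T) (eG : rel V)
    (f : T -> V) : Prop :=
  [/\ injective f,
      (forall x y : T, eG (f x) (f y) = eT x y) &
      (forall (x : T) (v : V), x != r -> eG (f x) v -> v \in codom f)].

(* Let A and B be the images of two overlapping pendant copies with roots
   a <> b.  Pulled back to T, the set of vertices landing in B is closed under
   adjacency unless b lies in A, so by connectedness of T and #|A| = #|B| we
   get A = B and hence b in A; symmetrically a in B.  Then A :|: B is closed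
   under adjacency in G (a vertex other than a in A has its neighbours in A,
   and a itself is a non-root vertex of the copy B), so it is all of G; but
   #|A :|: B| < 2t because A and B meet. *)
From mathcomp Require Import all_boot.

Set Implicit Arguments.
Unset Strict Implicit.
Unset Printing Implicit Defensive.

Section EdgeClosed.

Variables (V : finType) (e : rel V).

Definition edge_closed (S : {set V}) : Prop :=
  forall u v, u \in S -> e u v -> v \in S.

Lemma connected_edge_closed_setT (S : {set V}) (x : V) :
  connected_graph e -> edge_closed S -> x \in S -> S = [set: V].
Proof.
move=> conn closedS Sx; apply/setP => y; rewrite inE.
have /connectP[p ep ->] := conn x y.
elim: p x Sx ep => //= z p IHp x Sx /andP[exz ep].
exact: IHp (closedS _ _ Sx exz) ep.
Qed.

End EdgeClosed.

Lemma cardsU_lt (V : finType) (A B : {set V}) (x : V) :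
  x \in A -> x \in B -> #|A :|: B| < #|A| + #|B|.
Proof.
move=> Ax Bx; rewrite -cardsUI -addn1 leq_add2l card_gt0.
by apply/set0Pn; exists x; rewrite inE Ax.
Qed.

Section PendantCopy.

Variables (T V : finType) (eT : rel T) (r : T) (eG : rel V).

Lemma card_pendant_image (f : T -> V) :
  pendant_copy eT r eG f -> #|f @: T| = #|T|.
Proof. by case=> injf _ _; rewrite card_imset. Qed.

Lemma pendant_image_edge (f : T -> V) (u v : V) :
  pendant_copy eT r eG f -> u \in f @: T -> u != f r -> eG u v -> v \in f @: T.
Proof.
case=> _ _ pendf /imsetP[x _ ->] fxNfr efxv.
have xNr : x != r by apply: contraNneq fxNfr => ->.
by have /codomP[y ->] := pendf x v xNr efxv; apply: imset_f.
Qed.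

Lemma pendant_copy_root_mem (f g : T -> V) (x y : T) :
  connected_graph eT -> pendant_copy eT r eG f -> pendant_copy eT r eG g ->
  f x = g y -> g r \in f @: T.
Proof.
move=> connT fP gP fxy; apply/contraT => grNf.
have closed_pullback : edge_closed eT [set z | f z \in g @: T].
  move=> a b; rewrite !inE => fa eab.
  apply: (pendant_image_edge gP fa).
    by apply: contraNneq grNf => <-; apply: imset_f.
  by case: fP => _ -> _.
have fullT : [set z | f z \in g @: T] = [set: T].
  apply: (connected_edge_closed_setT (x := x)) connT closed_pullback _.
  by rewrite inE fxy imset_f.
have sub_fg : f @: T \subset g @: T.
  by apply/subsetP => _ /imsetP[a _ ->]; have := in_setT a; rewrite -fullT inE.
have eq_fg : f @: T = g @: T.
  apply/eqP; rewrite eqEcard sub_fg.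
  by rewrite (card_pendant_image fP) (card_pendant_image gP) leqnn.
by rewrite eq_fg imset_f in grNf.
Qed.

Lemma pendant_images_union_closed (f g : T -> V) :
  pendant_copy eT r eG f -> pendant_copy eT r eG g -> f r != g r ->
  f r \in g @: T -> g r \in f @: T -> edge_closed eG (f @: T :|: g @: T).
Proof.
move=> fP gP frNgr frg grf u v; rewrite !inE => /orP[uf | ug] euv.
- have [uE | uNfr] := eqVneq u (f r).
    by rewrite uE in euv; rewrite (pendant_image_edge gP frg frNgr euv) orbT.
  by rewrite (pendant_image_edge fP uf uNfr euv).
- have [uE | uNgr] := eqVneq u (g r).
    by rewrite uE in euv; rewrite (pendant_image_edge fP grf _ euv) // eq_sym.
  by rewrite (pendant_image_edge gP ug uNgr euv) orbT.
Qed.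

End PendantCopy.

Theorem lemma2p3 (T : finType) (eT : rel T) (r : T)
    (V : finType) (eG : rel V) :
  is_tree eT -> 2 <= #|T| ->
  simple_graph eG -> connected_graph eG -> 2 * #|T| <= #|V| ->
  forall f g : T -> V,
    pendant_copy eT r eG f -> pendant_copy eT r eG g ->
    (exists x y : T, f x = g y) ->
    f r = g r.
Proof.
move=> [_ connT _] _ _ connG tV f g fP gP [x [y fxy]].
apply/eqP/contraT => frNgr.
have frg := pendant_copy_root_mem connT gP fP (esym fxy).
have grf := pendant_copy_root_mem connT fP gP fxy.
have frf : f r \in f @: T by apply: imset_f.
have fullV : f @: T :|: g @: T = [set: V].
  apply: (connected_edge_closed_setT (x := f r)) connG
    (pendant_images_union_closed fP gP frNgr frg grf) _.
  by rewrite inE frf.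
have := cardsU_lt frf frg.
rewrite fullV cardsT (card_pendant_image fP) (card_pendant_image gP).
by rewrite addnn -mul2n ltnNge tV.
Qed.
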